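(* Let $K$ be a field with a non-trivial non-Archimedean valuation $|\cdot|$, let $X$ be a complete non-Archimedean normed space over $K$, fix $k\in\mathbb N$ with $|2k^4|\neq0$, and for $f:G\to X$ let $$\Delta f(x,y)=f(kx+y)+f(kx-y)-k^2[f(x+y)+f(x-y)]-2k^2(k^2-1)f(x)+2(k^2-1)f(y).$$ Let $\beta:[0,\infty)\to[0,\infty)$ be a function satisfying (i) $\beta(|k|t)\le\beta(|k|)\beta(t)$ for all $t\ge0$, and (ii) $\beta(|k|)<|k|^4$. Let $\delta>0$, let $G$ be a normed space, and let $f:G\to X$ satisfy $$\|\Delta f(x,y)\|\le\delta[\beta(\|x\|)+\beta(\|y\|)]\quad\text{for all }x,y\in G.$$ Then there exists a unique quartic mapping $Q:G\to X$ (i.e. $\Delta Q(x,y)=0$ for all $x,y\in G$) such that $$\|f(x)-Q(x)\|\le\frac{1}{|2k^4|}\delta\,\beta(\|x\|)\quad\text{for all }x\in G.$$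
   Context: A non-Archimedean field is a field $K$ with $|\cdot|:K\to[0,\infty)$ such that $|r|=0$ iff $r=0$, $|rs|=|r||s|$, $|r+s|\le\max\{|r|,|s|\}$. A non-Archimedean norm on a $K$-vector space satisfies $\|x\|=0$ iff $x=0$, $\|rx\|=|r|\|x\|$, $\|x+y\|\le\max\{\|x\|,\|y\|\}$. Integers are regarded as elements of $K$ and $|k|$ is the valuation of $k$ in $K$. *)

From HB Require Import structures.
From mathcomp Require Import all_boot all_order all_algebra.
Set Implicit Arguments. Unset Strict Implicit. Unset Printing Implicit Defensive.
Import Order.TTheory GRing.Theory Num.Theory.
Local Open Scope ring_scope.

Definition nonarch_abs (R : realFieldType) (K : fieldType) (abs : K -> R) : Prop :=
  [/\ forall r, 0 <= abs r,
      forall r, abs r = 0 <-> r = 0,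
      forall r s, abs (r * s) = abs r * abs s &
      forall r s, abs (r + s) <= Num.max (abs r) (abs s)].

Definition nontrivial_abs (R : realFieldType) (K : fieldType) (abs : K -> R) : Prop :=
  exists r : K, abs r <> 0 /\ abs r <> 1.

Definition nonarch_norm (R : realFieldType) (K : fieldType) (abs : K -> R)
  (X : lmodType K) (nrm : X -> R) : Prop :=
  [/\ forall x, 0 <= nrm x,
      forall x, nrm x = 0 <-> x = 0,
      forall (r : K) x, nrm (r *: x) = abs r * nrm x &
      forall x y, nrm (x + y) <= Num.max (nrm x) (nrm y)].

Definition is_norm (R : realFieldType) (K : fieldType) (abs : K -> R)
  (G : lmodType K) (nrm : G -> R) : Prop :=
  [/\ forall x, 0 <= nrm x,
      forall x, nrm x = 0 <-> x = 0,
      forall (r : K) x, nrm (r *: x) = abs r * nrm x &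
      forall x y, nrm (x + y) <= nrm x + nrm y].

Definition complete_wrt (R : realFieldType) (K : fieldType) (X : lmodType K)
  (nrm : X -> R) : Prop :=
  forall u : nat -> X,
    (forall e : R, 0 < e -> exists N : nat, forall m n : nat,
        (N <= m)%N -> (N <= n)%N -> nrm (u m - u n) < e) ->
    exists l : X, forall e : R, 0 < e -> exists N : nat, forall n : nat,
        (N <= n)%N -> nrm (u n - l) < e.

Definition Delta (K : fieldType) (G X : lmodType K) (k : nat) (f : G -> X)
  (x y : G) : X :=
  let c : K := k%:R in
  f (c *: x + y) + f (c *: x - y) - c ^+ 2 *: (f (x + y) + f (x - y))
  - (2 * c ^+ 2 * (c ^+ 2 - 1)) *: f x + (2 * (c ^+ 2 - 1)) *: f y.

Definition quartic (K : fieldType) (G X : lmodType K) (k : nat) (Q : G -> X) : Prop :=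
  forall x y, Delta k Q x y = 0.

From HB Require Import structures.
From mathcomp Require Import all_boot all_order all_algebra.
From mathcomp Require Import reals.
From mathcomp Require Import ring lra.
From Stdlib Require Import IndefiniteDescription FunctionalExtensionality.
Import Order.TTheory GRing.Theory Num.Theory.
Local Open Scope ring_scope.

(* Put y = 0: since Delta f (0,0) = 0 forces (k^2 - 1) f 0 = 0, the inequality becomes
   |f x - k^-4 f (k x)| <= delta beta(|x|) / |2 k^4|.  By (i) this error bound, evaluated
   at k^n x and rescaled by |k|^-4n, is at most rho^n times the bound at x, where
   rho = beta(|k|) / |k|^4 < 1 by (ii).  Hence the sequence k^-4n f (k^n x) satisfies
   |g_m x - g_n x| <= rho^n delta beta(|x|) / |2 k^4| for m >= n: the ultrametric
   inequality bounds a sum of steps by the largest one, so no geometric series appears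
   in the constant.  The limit Q inherits the bound, Delta Q has norm at most rho^n C for
   every n, hence vanishes, and any quartic Q' satisfies Q' x = k^-4n Q' (k^n x), which
   gives uniqueness by the same rescaling. *)

Set Implicit Arguments. Unset Strict Implicit.

Section NonArchimedeanAbs.
Variables (R : realFieldType) (K : fieldType) (abs : K -> R).
Hypothesis ha : nonarch_abs abs.

Lemma abs_ge0 x : 0 <= abs x. Proof. by case: ha. Qed.

Lemma abs_eq0 x : (abs x == 0) = (x == 0).
Proof. by case: ha => _ eq0 _ _; apply/eqP/eqP => /eq0. Qed.

Lemma abs0 : abs 0 = 0. Proof. by apply/eqP; rewrite abs_eq0. Qed.

Lemma absM x y : abs (x * y) = abs x * abs y. Proof. by case: ha. Qed.

Lemma abs1 : abs 1 = 1.
Proof.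
have nz : abs 1 != 0 by rewrite abs_eq0 oner_eq0.
by apply: (mulfI nz); rewrite -absM !mulr1.
Qed.

Lemma absX x n : abs (x ^+ n) = abs x ^+ n.
Proof. by elim: n => [|n IH]; rewrite ?expr0 ?abs1 // !exprS absM IH. Qed.

Lemma absV x : abs x^-1 = (abs x)^-1.
Proof.
have [->|x0] := eqVneq x 0; first by rewrite invr0 abs0 invr0.
have ax : abs x != 0 by rewrite abs_eq0.
by apply: (mulfI ax); rewrite -absM !mulfV // abs1.
Qed.

Lemma absN1 : abs (-1) = 1.
Proof.
have : abs (-1) ^+ 2 = 1 ^+ 2 by rewrite expr2 -absM mulrNN mulr1 abs1 expr1n.
by move/eqP; rewrite eqrXn2 ?abs_ge0 // => /eqP.
Qed.

Lemma absN x : abs (- x) = abs x.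
Proof. by rewrite -mulN1r absM absN1 mul1r. Qed.

Lemma abs_natr_le1 n : abs n%:R <= 1.
Proof.
have [_ _ _ absD] := ha.
elim: n => [|n IH]; first by rewrite abs0.
by rewrite mulrS; apply: le_trans (absD _ _) _; rewrite ge_max abs1 lexx IH.
Qed.

End NonArchimedeanAbs.

Section NonArchimedeanNorm.
Variables (R : realFieldType) (K : fieldType) (abs : K -> R).
Variables (X : lmodType K) (nX : X -> R).
Hypotheses (ha : nonarch_abs abs) (hn : nonarch_norm abs nX).

Lemma nrm_ge0 x : 0 <= nX x. Proof. by case: hn. Qed.

Lemma nrm_eq0 x : (nX x == 0) = (x == 0).
Proof. by case: hn => _ eq0 _ _; apply/eqP/eqP => /eq0. Qed.

Lemma nrm0 : nX 0 = 0. Proof. by apply/eqP; rewrite nrm_eq0. Qed.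

Lemma nrmZ r x : nX (r *: x) = abs r * nX x. Proof. by case: hn. Qed.

Lemma nrmN x : nX (- x) = nX x.
Proof. by rewrite -scaleN1r nrmZ (absN1 ha) mul1r. Qed.

Lemma nrm_distC x y : nX (x - y) = nX (y - x).
Proof. by rewrite -nrmN opprB. Qed.

Lemma nrmD_le x y M : nX x <= M -> nX y <= M -> nX (x + y) <= M.
Proof.
have [_ _ _ nrmD] := hn.
by move=> hx hy; apply: le_trans (nrmD x y) _; rewrite ge_max hx hy.
Qed.

Lemma ultrametric_le z x y M : nX (x - z) <= M -> nX (z - y) <= M -> nX (x - y) <= M.
Proof. by move=> hxz hzy; rewrite -(subrK z x) -addrA; apply: nrmD_le. Qed.

Lemma nrm_triangle x y : nX (x + y) <= nX x + nX y.
Proof. by apply: nrmD_le; rewrite ?lerDl ?lerDr nrm_ge0. Qed.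

Lemma nrmZ_le1 s x : abs s <= 1 -> nX (s *: x) <= nX x.
Proof. by move=> s1; rewrite nrmZ ler_piMl ?nrm_ge0. Qed.

End NonArchimedeanNorm.

Section Geometric.
Variable R : archiRealFieldType.

Lemma bernoulli_le (x : R) n : 0 <= x -> 1 + n%:R * x <= (1 + x) ^+ n.
Proof.
move=> x0; elim: n => [|n IH]; first by rewrite mul0r addr0 expr0.
rewrite exprS; apply: le_trans (ler_wpM2l _ IH); last exact: addr_ge0 ler01 x0.
have : 0 <= n%:R * x * x by rewrite !mulr_ge0.
by rewrite mulrSr; nra.
Qed.

Lemma exists_expr_lt (r e : R) : 0 <= r -> r < 1 -> 0 < e -> exists N : nat, r ^+ N < e.
Proof.
move=> r0 r1 e0; have [->|rn0] := eqVneq r 0; first by exists 1%N; rewrite expr1.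
have rpos : 0 < r by rewrite lt_def rn0.
pose y := r^-1 - 1.
have ypos : 0 < y by rewrite subr_gt0 invf_gt1.
have [N hN] : exists N : nat, e^-1 / y < N%:R.
  by exists (Num.bound (e^-1 / y)); rewrite archi_boundP // divr_ge0 ?invr_ge0 ?ltW.
exists N; rewrite -(invrK e) -[r]invrK exprVn ltf_pV2 ?posrE ?exprn_gt0 ?invr_gt0 //.
have := bernoulli_le N (ltW ypos); rewrite /y subrKC; apply: lt_le_trans.
rewrite ltr_pdivrMr // in hN.
by apply: lt_le_trans hN _; rewrite -/y lerDr.
Qed.

Lemma exists_expr_mul_lt (r V e : R) : 0 <= r -> r < 1 -> 0 <= V -> 0 < e ->
  exists N : nat, r ^+ N * V < e.
Proof.
move=> r0 r1 V0 e0; have V1 : 0 < V + 1 by rewrite ltr_wpDl.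
have [N hN] := exists_expr_lt r0 r1 (divr_gt0 e0 V1).
have VV1 : V <= V + 1 by rewrite lerDl.
exists N; apply: le_lt_trans (ler_wpM2l (exprn_ge0 N r0) VV1) _.
by rewrite -ltr_pdivlMr.
Qed.

Lemma geometric_le_eq0 (r C u : R) : 0 <= r -> r < 1 -> 0 <= u ->
  (forall n, u <= r ^+ n * C) -> u = 0.
Proof.
move=> r0 r1 u0 hu; have C0 : 0 <= C by have := hu 0%N; rewrite expr0 mul1r; apply: le_trans.
apply/eqP; rewrite eq_le u0 andbT; apply/ler_addgt0Pr => e e0; rewrite add0r.
have [N hN] := exists_expr_mul_lt r0 r1 C0 e0.
exact: ltW (le_lt_trans (hu N) hN).
Qed.

End Geometric.

Section GeometricCauchy.
Variables (R : archiRealFieldType) (K : fieldType) (abs : K -> R).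
Variables (X : lmodType K) (nX : X -> R).
Hypotheses (ha : nonarch_abs abs) (hn : nonarch_norm abs nX) (hc : complete_wrt nX).

Lemma geometric_cauchy_limit (u : nat -> X) (r V : R) : 0 <= r -> r < 1 ->
  (forall n m, (n <= m)%N -> nX (u m - u n) <= r ^+ n * V) ->
  exists l, forall n, nX (l - u n) <= r ^+ n * V.
Proof.
move=> r0 r1 hu.
have V0 : 0 <= V.
  by have := hu 0%N 0%N (leqnn 0); rewrite subrr expr0 mul1r; apply: le_trans (nrm_ge0 hn _).
have [l hl] : exists l, forall e, 0 < e -> exists N : nat, forall n : nat,
    (N <= n)%N -> nX (u n - l) < e.
  apply: hc => e e0; have [N hN] := exists_expr_mul_lt r0 r1 V0 e0.
  exists N => m n hm hn'; apply: le_lt_trans hN.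
  by apply: (ultrametric_le hn (z := u N)); rewrite ?(nrm_distC ha hn (u N)); apply: hu.
exists l => n; apply/ler_addgt0Pr => e e0; have [N hN] := hl e e0.
have rV0 : 0 <= r ^+ n * V by rewrite mulr_ge0 ?exprn_ge0.
apply: (ultrametric_le hn (z := u (maxn N n))).
  by rewrite (nrm_distC ha hn); apply: le_trans (ltW (hN _ (leq_maxl _ _))) _; rewrite lerDr.
by apply: le_trans (hu _ _ (leq_maxr _ _)) _; rewrite lerDl ltW.
Qed.

End GeometricCauchy.

Lemma subrDACA (V : zmodType) (a b c d : V) : (a - b) + (c - d) = (a + c) - (b + d).
Proof. by rewrite addrACA opprD. Qed.

Lemma subrBACA (V : zmodType) (a b c d : V) : (a - b) - (c - d) = (a - c) - (b - d).
Proof. by rewrite !opprB !subrDACA [c + b]addrC. Qed.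

Section DeltaAlgebra.
Variables (K : fieldType) (G X : lmodType K) (k : nat).
Local Notation c := (k%:R : K).

Lemma DeltaB (h1 h2 : G -> X) x y :
  Delta k (fun z => h1 z - h2 z) x y = Delta k h1 x y - Delta k h2 x y.
Proof.
have shape (p m a b d p' m' a' b' d' : X) :
    (p + m - a - b + d) - (p' + m' - a' - b' + d') =
    (p - p') + (m - m') - (a - a') - (b - b') + (d - d').
  by rewrite (subrDACA p) (subrBACA (p + m)) (subrBACA (p + m - a)) (subrDACA (p + m - a - b)).
rewrite /Delta shape -!scalerBr; congr (_ - _ *: _ - _ + _).
by rewrite subrDACA.
Qed.

Lemma DeltaZ s (h : G -> X) x y :
  Delta k (fun z => s *: h z) x y = s *: Delta k h x y.
Proof. by rewrite /Delta !(scalerDr, scalerN, scalerA) ![s * _]mulrC. Qed.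

Lemma Delta_comp_scale t (h : G -> X) x y :
  Delta k (fun z => h (t *: z)) x y = Delta k h (t *: x) (t *: y).
Proof. by rewrite /Delta !(scalerDr, scalerN, scalerA) ![t * _]mulrC. Qed.

Lemma Delta_x0 (h : G -> X) x :
  Delta k h x 0 = 2 *: h (c *: x) - (2 * c ^+ 4) *: h x + (2 * (c ^+ 2 - 1)) *: h 0.
Proof.
rewrite /Delta !addr0 !subr0 -mulr2n -scaler_nat -!addrA; congr (_ + _).
rewrite !addrA -opprD; congr (- _ + _).
by rewrite -mulr2n -scaler_nat scalerA -scalerDl; congr (_ *: _); ring.
Qed.

Lemma Delta00 (h : G -> X) :
  Delta k h 0 0 = - (2 * c ^+ 2) *: ((c ^+ 2 - 1) *: h 0).
Proof.
rewrite Delta_x0 scaler0 scalerA -scalerBl -scalerDl; congr (_ *: _); ring.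
Qed.

Hypotheses (two_neq0 : (2 : K) != 0) (natr_neq0 : c != 0).

Lemma Delta00_eq0 (h : G -> X) : Delta k h 0 0 = 0 -> (c ^+ 2 - 1) *: h 0 = 0.
Proof.
rewrite Delta00 => /eqP; rewrite scaler_eq0 oppr_eq0 mulf_eq0 (negbTE two_neq0).
by rewrite expf_eq0 (negbTE natr_neq0) andbF => /eqP.
Qed.

Lemma Delta_x0_scaling (h : G -> X) x : (c ^+ 2 - 1) *: h 0 = 0 ->
  h x - (c ^+ 4)^-1 *: h (c *: x) = - (2 * c ^+ 4)^-1 *: Delta k h x 0.
Proof.
move=> h0; rewrite Delta_x0 -[(2 * _) *: h 0]scalerA h0 scaler0 addr0 scalerBr !scalerA addrC.
have c4 : c ^+ 4 != 0 by rewrite expf_neq0.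
congr (_ + _); last by rewrite mulNr mulVf ?mulf_neq0 // scaleN1r opprK.
by rewrite -scaleNr; congr (_ *: _); field; rewrite natr_neq0 two_neq0.
Qed.

Lemma quartic_scaling (h : G -> X) n x :
  quartic k h -> h x = ((c ^+ 4)^-1) ^+ n *: h (c ^+ n *: x).
Proof.
move=> qh; have h0 := Delta00_eq0 (qh 0 0).
elim: n x => [|n IH] x; first by rewrite !expr0 !scale1r.
have /eqP := Delta_x0_scaling (c ^+ n *: x) h0; rewrite qh scaler0 subr_eq0 => /eqP step.
by rewrite IH step !scalerA -exprSr -exprS.
Qed.

End DeltaAlgebra.

Section DeltaBound.
Variables (R : realFieldType) (K : fieldType) (abs : K -> R).
Variables (G X : lmodType K) (nX : X -> R).
Hypotheses (ha : nonarch_abs abs) (hn : nonarch_norm abs nX).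

Lemma nrm_Delta_le k (h : G -> X) x y :
  nX (Delta k h x y) <= nX (h (k%:R *: x + y)) + nX (h (k%:R *: x - y))
    + nX (h (x + y)) + nX (h (x - y)) + nX (h x) + nX (h y).
Proof.
have absM_le1 u v : abs u <= 1 -> abs v <= 1 -> abs (u * v) <= 1.
  by move=> u1 v1; rewrite (absM ha) -[1]mulr1 ler_pM ?(abs_ge0 ha).
have c2 : abs ((k%:R : K) ^+ 2) <= 1.
  by rewrite (absX ha) exprn_ile1 ?(abs_ge0 ha) ?(abs_natr_le1 ha).
have c21 : abs ((k%:R : K) ^+ 2 - 1) <= 1.
  have [_ _ _ absD] := ha.
  by apply: le_trans (absD _ _) _; rewrite ge_max c2 (absN ha) (abs1 ha) lexx.
have two : abs (2 : K) <= 1 by exact: (abs_natr_le1 ha 2).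
have tri := nrm_triangle hn; have le1 := nrmZ_le1 hn.
rewrite /Delta; apply: le_trans (tri _ _) _; apply: lerD; last exact/le1/absM_le1.
apply: le_trans (tri _ _) _; rewrite (nrmN ha hn); apply: lerD; last exact/le1/absM_le1/c21/absM_le1.
apply: le_trans (tri _ _) _; rewrite (nrmN ha hn) -addrA; apply: lerD; first exact: tri.
exact: le_trans (le1 _ _ c2) (tri _ _).
Qed.

End DeltaBound.

Section QuarticStability.
Variables (R : archiRealFieldType) (K : fieldType) (abs : K -> R).
Variables (X G : lmodType K) (nX : X -> R) (nG : G -> R).
Variables (k : nat) (beta : R -> R) (delta : R) (f : G -> X).
Hypotheses (ha : nonarch_abs abs) (hn : nonarch_norm abs nX) (hc : complete_wrt nX).
Hypotheses (hG : is_norm abs nG) (h2k4 : abs (2 * (k%:R : K) ^+ 4) != 0).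
Hypotheses (beta_ge0 : forall t, 0 <= t -> 0 <= beta t)
  (betaM : forall t, 0 <= t -> beta (abs (k%:R : K) * t) <= beta (abs (k%:R : K)) * beta t)
  (beta_lt : beta (abs (k%:R : K)) < abs (k%:R : K) ^+ 4).
Hypotheses (delta_ge0 : 0 <= delta)
  (hf : forall x y, nX (Delta k f x y) <= delta * (beta (nG x) + beta (nG y))).

Local Notation c := (k%:R : K).
Local Notation a := (abs c).
Local Notation d := ((c ^+ 4)^-1).
Let rho := beta a / a ^+ 4.
Let err x := delta * beta (nG x) / abs (2 * c ^+ 4).

Lemma mul2natr4_neq0 : 2 * c ^+ 4 != 0.
Proof. by apply: contra h2k4 => /eqP ->; rewrite (abs0 ha). Qed.

Lemma two_neq0 : (2 : K) != 0.
Proof. by move: mul2natr4_neq0; rewrite mulf_eq0 negb_or => /andP[]. Qed.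

Lemma natr_neq0 : c != 0.
Proof. by move: mul2natr4_neq0; rewrite mulf_eq0 negb_or expf_eq0 => /andP[_]; case: eqP. Qed.

Lemma abs_natr_gt0 : 0 < a.
Proof. by rewrite lt_def (abs_eq0 ha) natr_neq0 (abs_ge0 ha). Qed.

Lemma beta_abs_natr_lt1 : beta a < 1.
Proof.
apply: lt_le_trans beta_lt _.
by rewrite exprn_ile1 ?(abs_ge0 ha) ?(abs_natr_le1 ha).
Qed.

Lemma beta0 : beta 0 = 0.
Proof.
have := betaM (lexx 0); rewrite mulr0 => b0.
have := beta_ge0 (lexx 0); have := beta_abs_natr_lt1; nra.
Qed.

Lemma rho_ge0 : 0 <= rho.
Proof. by rewrite divr_ge0 ?exprn_ge0 ?beta_ge0 ?(abs_ge0 ha). Qed.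

Lemma rho_lt1 : rho < 1.
Proof. by rewrite ltr_pdivrMr ?mul1r ?exprn_gt0 ?abs_natr_gt0. Qed.

Lemma beta_expr n t : 0 <= t -> beta (a ^+ n * t) <= beta a ^+ n * beta t.
Proof.
move=> t0; elim: n => [|n IH]; first by rewrite !expr0 !mul1r.
rewrite !exprS -!mulrA; apply: le_trans (betaM _) _.
  by rewrite mulr_ge0 ?exprn_ge0 ?(abs_ge0 ha).
by rewrite ler_wpM2l ?beta_ge0 ?(abs_ge0 ha).
Qed.

Lemma beta_scale n x : (a ^+ 4)^-1 ^+ n * beta (nG (c ^+ n *: x)) <= rho ^+ n * beta (nG x).
Proof.
have [nG_ge0 _ nGZ _] := hG.
rewrite nGZ (absX ha); apply: le_trans (ler_wpM2l _ (beta_expr n (nG_ge0 x))) _.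
  by rewrite exprn_ge0 ?invr_ge0 ?exprn_ge0 ?(abs_ge0 ha).
by rewrite mulrA -exprMn [_^-1 * _]mulrC.
Qed.

Lemma err_ge0 x : 0 <= err x.
Proof.
have [nG_ge0 _ _ _] := hG.
by rewrite /err !mulr_ge0 ?invr_ge0 ?(abs_ge0 ha) ?beta_ge0.
Qed.

Lemma err_scale n x : (a ^+ 4)^-1 ^+ n * err (c ^+ n *: x) <= rho ^+ n * err x.
Proof.
have mul_err u v : u * (delta * v / abs (2 * c ^+ 4)) = delta / abs (2 * c ^+ 4) * (u * v).
  by ring.
rewrite /err !mul_err ler_wpM2l ?beta_scale // divr_ge0 ?(abs_ge0 ha) //.
Qed.

Lemma abs_scaling_expr n : abs (d ^+ n) = (a ^+ 4)^-1 ^+ n.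
Proof. by rewrite (absX ha) (absV ha) (absX ha). Qed.

Lemma beta_nG0 : beta (nG 0) = 0.
Proof. by have [_ nG_eq0 _ _] := hG; rewrite (proj2 (nG_eq0 0) erefl) beta0. Qed.

Lemma scale_f0 : (c ^+ 2 - 1) *: f 0 = 0.
Proof.
apply: (Delta00_eq0 two_neq0 natr_neq0); apply/eqP; rewrite -(nrm_eq0 hn) eq_le (nrm_ge0 hn) andbT.
by apply: le_trans (hf 0 0) _; rewrite beta_nG0 addr0 mulr0.
Qed.

Lemma f_step x : nX (f x - d *: f (c *: x)) <= err x.
Proof.
rewrite (Delta_x0_scaling two_neq0 natr_neq0 _ scale_f0) (nrmZ hn) (absN ha) (absV ha).
rewrite /err mulrC ler_wpM2r ?invr_ge0 ?(abs_ge0 ha) //.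
by apply: le_trans (hf x 0) _; rewrite beta_nG0 addr0.
Qed.

Let hyers n x := d ^+ n *: f (c ^+ n *: x).

Lemma hyers_step n x : nX (hyers n.+1 x - hyers n x) <= rho ^+ n * err x.
Proof.
rewrite /hyers [d ^+ n.+1]exprSr [c ^+ n.+1]exprS -!scalerA -scalerBr -opprB.
rewrite (nrmZ hn) (nrmN ha hn) abs_scaling_expr.
apply: le_trans (err_scale n x); rewrite ler_wpM2l ?f_step //.
by rewrite exprn_ge0 // invr_ge0 exprn_ge0 // (abs_ge0 ha).
Qed.

Lemma hyers_cauchy n m x : (n <= m)%N -> nX (hyers m x - hyers n x) <= rho ^+ n * err x.
Proof.
move/subnKC <-; elim: (m - n)%N => [|j IH].
  by rewrite addn0 subrr (nrm0 hn) mulr_ge0 ?exprn_ge0 ?rho_ge0 ?err_ge0.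
rewrite addnS; apply: (ultrametric_le hn (z := hyers (n + j)%N x)) => //.
apply: le_trans (hyers_step _ _) _; rewrite ler_wpM2r ?err_ge0 //.
by rewrite ler_wiXn2l ?rho_ge0 ?ltW ?rho_lt1 ?leq_addr.
Qed.

Lemma hyers_Delta n x y :
  nX (Delta k (hyers n) x y) <= rho ^+ n * (delta * (beta (nG x) + beta (nG y))).
Proof.
rewrite /hyers (DeltaZ k (d ^+ n) (fun z => f (c ^+ n *: z))) (Delta_comp_scale k (c ^+ n) f).
rewrite (nrmZ hn) abs_scaling_expr.
apply: le_trans (ler_wpM2l _ (hf _ _)) _.
  by rewrite exprn_ge0 // invr_ge0 exprn_ge0 // (abs_ge0 ha).
by rewrite mulrCA [rho ^+ n * _]mulrCA ler_wpM2l // !mulrDr lerD ?beta_scale.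
Qed.

Lemma hyers_limit : exists Q : G -> X, forall x n, nX (Q x - hyers n x) <= rho ^+ n * err x.
Proof.
apply: (functional_choice (fun x Qx => forall n, nX (Qx - hyers n x) <= rho ^+ n * err x)) => x.
exact: (geometric_cauchy_limit ha hn hc rho_ge0 rho_lt1 (fun n m => @hyers_cauchy n m x)).
Qed.

Lemma hyers_limit_quartic (Q : G -> X) :
  (forall x n, nX (Q x - hyers n x) <= rho ^+ n * err x) -> quartic k Q.
Proof.
move=> hQ x y; apply/eqP; rewrite -(nrm_eq0 hn); apply/eqP.
pose C := err (c *: x + y) + err (c *: x - y) + err (x + y) + err (x - y) + err x + err y
  + delta * (beta (nG x) + beta (nG y)).
apply: (geometric_le_eq0 (C := C) rho_ge0 rho_lt1 (nrm_ge0 hn _)) => n.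
rewrite -(subrK (Delta k (hyers n) x y) (Delta k Q x y)) -DeltaB.
apply: le_trans (nrm_triangle hn _ _) _; rewrite /C mulrDr lerD ?hyers_Delta //.
by apply: le_trans (nrm_Delta_le ha hn _ _ _ _) _; rewrite !mulrDr; do !apply: lerD.
Qed.

Lemma hyers_limit_approx (Q : G -> X) :
  (forall x n, nX (Q x - hyers n x) <= rho ^+ n * err x) -> forall x, nX (f x - Q x) <= err x.
Proof. by move=> hQ x; have := hQ x 0%N; rewrite /hyers !expr0 mul1r !scale1r (nrm_distC ha hn). Qed.

Lemma exists_quartic_approx : exists Q : G -> X, quartic k Q /\ forall x, nX (f x - Q x) <= err x.
Proof.
have [Q hQ] := hyers_limit.
by exists Q; split; [exact: hyers_limit_quartic | exact: hyers_limit_approx].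
Qed.

Lemma quartic_approx_unique (Q Q' : G -> X) : quartic k Q -> quartic k Q' ->
  (forall x, nX (f x - Q x) <= err x) -> (forall x, nX (f x - Q' x) <= err x) -> Q' = Q.
Proof.
move=> qQ qQ' fQ fQ'; apply: functional_extensionality => x.
apply/eqP; rewrite -subr_eq0 -(nrm_eq0 hn); apply/eqP.
apply: (geometric_le_eq0 (C := err x) rho_ge0 rho_lt1 (nrm_ge0 hn _)) => n.
rewrite (quartic_scaling two_neq0 natr_neq0 n x qQ) (quartic_scaling two_neq0 natr_neq0 n x qQ').
rewrite -scalerBr (nrmZ hn) abs_scaling_expr; apply: le_trans (err_scale n x).
rewrite ler_wpM2l ?exprn_ge0 ?invr_ge0 ?exprn_ge0 ?(abs_ge0 ha) //.
by apply: (ultrametric_le hn (z := f (c ^+ n *: x))); rewrite // (nrm_distC ha hn).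
Qed.

End QuarticStability.

Unset Implicit Arguments. Set Strict Implicit.

Theorem corollary3p2 (R : realType) (K : fieldType) (abs : K -> R)
  (X : lmodType K) (nX : X -> R) (G : lmodType K) (nG : G -> R)
  (k : nat) (beta : R -> R) (delta : R) (f : G -> X) :
  nonarch_abs abs -> nontrivial_abs abs ->
  nonarch_norm abs nX -> complete_wrt nX ->
  abs (2 * (k%:R : K) ^+ 4) != 0 ->
  (forall t, 0 <= t -> 0 <= beta t) ->
  (forall t, 0 <= t -> beta (abs (k%:R : K) * t) <= beta (abs (k%:R : K)) * beta t) ->
  beta (abs (k%:R : K)) < abs (k%:R : K) ^+ 4 ->
  0 < delta ->
  is_norm abs nG ->
  (forall x y : G, nX (Delta k f x y) <= delta * (beta (nG x) + beta (nG y))) ->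
  exists Q : G -> X,
    [/\ quartic k Q,
        (forall x : G, nX (f x - Q x) <= delta * beta (nG x) / abs (2 * (k%:R : K) ^+ 4)) &
        (forall Q' : G -> X, quartic k Q' ->
           (forall x : G, nX (f x - Q' x) <= delta * beta (nG x) / abs (2 * (k%:R : K) ^+ 4)) ->
           Q' = Q)].
Proof.
move=> ha _ hn hc h2k4 beta_ge0 betaM beta_lt delta_gt0 hG hf.
have delta_ge0 := ltW delta_gt0.
have [Q [qQ fQ]] := exists_quartic_approx ha hn hc hG h2k4 beta_ge0 betaM beta_lt delta_ge0 hf.
exists Q; split=> // Q' qQ' fQ'.
exact: (quartic_approx_unique ha hn hG h2k4 beta_ge0 betaM beta_lt delta_ge0 qQ qQ' fQ fQ').
Qed.
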